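(* Let $d,n$ be positive integers with $d\leq n^2/4$. Then $$p_d(n)<4e^{cn}n^{n+2\sqrt{d}}\max\{2^{-n},(2n)^{-\sqrt{d}}\}\qquad\text{with } c=\frac{3}{2e}+1.$$ Consequently, if $d=d(n)$ satisfies $dn^{-2}\to 0$ as $n\to\infty$, then $p_d(n)\leq n^{n+o(n)}$.
   Context: $\mathbb{Z}_+=\{0,1,2,\dots\}$. A set $S\subset\mathbb{Z}_+^d$ is a lower set if whenever $\mathbf{x}\in S$ and $\mathbf{x}'\in\mathbb{Z}_+^d$ satisfies $x'_i\leq x_i$ for all $i$, then $\mathbf{x}'\in S$. $p_d(n)$ denotes the number of lower sets in $\mathbb{Z}_+^d$ with exactly $n$ points. *)

From mathcomp Require Import all_boot all_order.
From mathcomp Require Import finmap.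
From Stdlib Require Import ClassicalEpsilon.
Set Implicit Arguments. Unset Strict Implicit. Unset Printing Implicit Defensive.
Local Open Scope fset_scope.

Definition point (d : nat) := {ffun 'I_d -> nat}.

Definition lower_set (d : nat) (S : {fset point d}) : Prop :=
  forall x : point d, x \in S ->
  forall y : point d, (forall i, y i <= x i) -> y \in S.

(* "N is the number of lower sets in Z_+^d with exactly n points":
   there is a duplicate-free list enumerating exactly these sets, of length N.
   (A lower set with n points is automatically finite, so it is an fset.) *)
Definition counts_lower_sets (d n N : nat) : Prop :=
  exists s : seq {fset point d},
    [/\ uniq s, size s = N &
        forall S : {fset point d}, S \in s <-> (lower_set S /\ #|` S| = n)].

Definition p (d n : nat) : nat :=
  epsilon (inhabits 0%N) (counts_lower_sets d n).

(* Order the points of Z_+^d by weight, ties broken by a fixed enumeration.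
   A nonzero point y of a lower set S is y = (y - e_l) + e_l for its first
   positive coordinate l, and both summands are earlier points of S; so y is
   encoded by l if y = e_l, and otherwise by the ranks in S of y - e_l and e_l.
   If |S| = n, the n - 1 codes of the nonzero points of S form a subset of a
   set of size d + n^2, from which S is recovered point by point in increasing
   order; hence p_d(n) <= C(d + n^2, n - 1).  For 4d <= n^2, the estimates
   C(a, k) k! <= a^k and n^n <= e^n n! then give p_d(n) <= (5en/4)^n, which is
   below both bounds of the theorem. *)

From Pilot Require Import Defs.
From mathcomp Require Import all_boot all_order all_algebra.
From mathcomp Require Import all_classical all_reals all_analysis.
From mathcomp Require Import finmap ring lra zify.
Set Implicit Arguments. Unset Strict Implicit. Unset Printing Implicit Defensive.
Import Order.TTheory GRing.Theory Num.Theory.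
Import numFieldNormedType.Exports.

Section LowerSetCodes.
Local Open Scope nat_scope.
Variable d : nat.
Local Notation point := (Defs.point d).
Implicit Types (x y z w : point) (S : {fset point}) (l : 'I_d).

Definition pt0 : point := [ffun=> 0%N].
Definition unit_pt l : point := [ffun j => nat_of_bool (j == l)].
Definition dec_pt y l : point := [ffun j => y j - (j == l)].
Definition weight y := (\sum_i y i)%N.

Definition pt_lt x y :=
  (weight x < weight y) || (weight x == weight y) && (choice.pickle x < choice.pickle y).

Lemma pt_ltxx x : pt_lt x x = false.
Proof. by rewrite /pt_lt !ltnn andbF. Qed.

Lemma pt_lt_trans y x z : pt_lt x y -> pt_lt y z -> pt_lt x z.
Proof.
rewrite /pt_lt => /orP[h1|/andP[/eqP e1 h1]] /orP[h2|/andP[/eqP e2 h2]].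
- by rewrite (ltn_trans h1 h2).
- by rewrite -e2 h1.
- by rewrite e1 h2.
- by rewrite e1 e2 eqxx (ltn_trans h1 h2) orbT.
Qed.

Lemma pt_lt_total x y : x != y -> pt_lt x y || pt_lt y x.
Proof.
move=> neq_xy; rewrite /pt_lt; case: ltngtP => //= _.
case: ltngtP => //= /(pcan_inj choice.pickleK) eq_xy.
by rewrite eq_xy eqxx in neq_xy.
Qed.

Lemma pt_lt_ind (P : point -> Prop) :
  (forall z, (forall w, pt_lt w z -> P w) -> P z) -> forall z, P z.
Proof.
move=> IH; suff PW s z : weight z = s -> P z by move=> z; exact: PW.
elim/ltn_ind: s z => s IHs; suff PK q z : weight z = s -> choice.pickle z = q -> P z.
  by move=> z wz; exact: PK.
elim/ltn_ind: q z => q IHq z wz pz; apply: IH => w /orP[lt_wz|/andP[/eqP e lt_wz]].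
  by apply: (IHs (weight w)); rewrite // -wz.
by apply: (IHq (choice.pickle w)); rewrite // -?pz // e.
Qed.

Lemma dec_pt_le y l j : dec_pt y l j <= y j.
Proof. by rewrite ffunE leq_subr. Qed.

Lemma unit_pt_le y l : 0 < y l -> forall j, unit_pt l j <= y j.
Proof. by move=> pos_l j; rewrite ffunE; case: eqP => [->|]. Qed.

Lemma dec_pt_inj y1 y2 l : 0 < y1 l -> 0 < y2 l -> dec_pt y1 l = dec_pt y2 l -> y1 = y2.
Proof.
move=> pos1 pos2 /ffunP eq_dec; apply/ffunP => j; have := eq_dec j.
rewrite !ffunE; case: eqP => [->|_]; last by rewrite !subn0.
by rewrite !subn1 => /(congr1 S); rewrite !prednK.
Qed.

Lemma dec_unit_pt l : dec_pt (unit_pt l) l = pt0.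
Proof. by apply/ffunP => j; rewrite !ffunE subnn. Qed.

Lemma unit_pt_inj : injective unit_pt.
Proof. by move=> l l' /ffunP /(_ l); rewrite !ffunE eqxx; case: eqP. Qed.

Lemma weight_dec_pt y l : 0 < y l -> weight y = (weight (dec_pt y l)).+1.
Proof.
move=> pos_l; rewrite /weight (bigD1 l) // [in RHS](bigD1 l) //= ffunE eqxx.
rewrite subn1 -addSn prednK //; congr (_ + _); apply: eq_bigr => j /negbTE neq_jl.
by rewrite ffunE neq_jl subn0.
Qed.

Lemma weight_eq0 y : (weight y == 0) = (y == pt0).
Proof.
rewrite /weight sum_nat_eq0; apply/forallP/eqP => [y0|-> j]; last by rewrite ffunE.
by apply/ffunP => j; rewrite ffunE; apply/eqP; exact: y0.
Qed.

Lemma pt_lt_dec y l : 0 < y l -> pt_lt (dec_pt y l) y.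
Proof. by move=> pos_l; rewrite /pt_lt (weight_dec_pt pos_l) ltnSn. Qed.

Lemma unit_pt_pos l : 0 < unit_pt l l.
Proof. by rewrite ffunE eqxx. Qed.

Lemma pt_lt_unit y l : 0 < y l -> dec_pt y l != pt0 -> pt_lt (unit_pt l) y.
Proof.
move=> pos_l nz; rewrite /pt_lt (weight_dec_pt pos_l).
rewrite (weight_dec_pt (unit_pt_pos l)) dec_unit_pt.
have -> : weight pt0 = 0 by apply/eqP; rewrite weight_eq0.
by rewrite ltnS lt0n weight_eq0 nz.
Qed.

Lemma pick_pos y : y != pt0 -> exists2 l, [pick i | 0 < y i] = Some l & 0 < y l.
Proof.
case: pickP => [l pos_l _|y0]; first by exists l.
by case/eqP; apply/ffunP => j; rewrite ffunE; apply/eqP; rewrite -leqn0 leqNgt y0.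
Qed.

Definition rank S x := count (pt_lt^~ x) (enum_fset S).

Lemma rank_lt_card S x : x \in S -> rank S x < #|` S|%fset.
Proof.
move=> xS; rewrite /rank -(count_predC (pt_lt^~ x)) -addn1 leq_add2l -has_count.
by apply/hasP; exists x; rewrite //= pt_ltxx.
Qed.

Lemma rank_lt S x y : x \in S -> pt_lt x y -> rank S x < rank S y.
Proof.
move=> xS lt_xy; rewrite /rank -!size_filter.
apply: (@uniq_leq_size _ (x :: [seq w <- enum_fset S | pt_lt w x])).
  by rewrite /= filter_uniq ?fset_uniq // mem_filter pt_ltxx.
move=> w; rewrite inE !mem_filter => /predU1P[->|/andP[lt_wx ->]].
  by rewrite lt_xy xS.
by rewrite (pt_lt_trans lt_wx lt_xy).
Qed.

Lemma rank_inj S : {in S &, injective (rank S)}.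
Proof.
move=> x y xS yS eq_r; apply/eqP/negPn/negP => /pt_lt_total /orP[] lt.
  by have := rank_lt xS lt; rewrite eq_r ltnn.
by have := rank_lt yS lt; rewrite eq_r ltnn.
Qed.

Lemma eq_rank S S' x :
  (forall w, pt_lt w x -> (w \in S) = (w \in S')) -> rank S x = rank S' x.
Proof.
move=> agree; rewrite /rank -!size_filter; apply/perm_size/uniq_perm.
- exact/filter_uniq/fset_uniq.
- exact/filter_uniq/fset_uniq.
by move=> w; rewrite !mem_filter; case lt_wx: (pt_lt w x); rewrite //= agree.
Qed.

Lemma lower_set_pt0 S : lower_set S -> (0 < #|` S|)%fset -> pt0 \in S.
Proof.
by move=> lowS; rewrite cardfs_gt0 => /fset0Pn [y /lowS]; apply=> j; rewrite ffunE.
Qed.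

(* What decoding knows of a point [y] before [y \in S] is established. *)
Definition covers_below S y :=
  forall w, (forall j, w j <= y j) -> pt_lt w y -> w \in S.

Lemma lower_set_covers S y : lower_set S -> y \in S -> covers_below S y.
Proof. by move=> lowS yS w le_wy _; exact: lowS yS w le_wy. Qed.

Variable k : nat.
Local Notation code_type := ('I_d + 'I_k.+1 * 'I_k.+1)%type.

Lemma inord_rank_inj S x y : #|` S|%fset = k.+1 -> x \in S -> y \in S ->
  inord (rank S x) = inord (rank S y) :> 'I_k.+1 -> x = y.
Proof.
move=> cardS xS yS /(congr1 (@nat_of_ord _)).
by rewrite !inordK -?cardS ?rank_lt_card // => /rank_inj; apply.
Qed.

Definition code S y : code_type :=
  if [pick l | 0 < y l] is Some l then
    if dec_pt y l == pt0 then inl l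
    else inr (inord (rank S (dec_pt y l)), inord (rank S (unit_pt l)))
  else inr (ord0, ord0).

Lemma eq_code S S' y :
  (forall w, pt_lt w y -> (w \in S) = (w \in S')) -> code S y = code S' y.
Proof.
move=> agree; rewrite /code; case: pickP => // l pos_l; case: eqP => // /eqP nz.
have below z : pt_lt z y -> forall w, pt_lt w z -> (w \in S) = (w \in S').
  by move=> lt_zy w lt_wz; apply/agree/(pt_lt_trans lt_wz).
by rewrite (eq_rank (below _ (pt_lt_dec pos_l))) (eq_rank (below _ (pt_lt_unit pos_l nz))).
Qed.

Lemma code_inj S y1 y2 : #|` S|%fset = k.+1 -> y1 != pt0 -> y2 != pt0 ->
  covers_below S y1 -> covers_below S y2 -> code S y1 = code S y2 -> y1 = y2.
Proof.
move=> cardS nz1 nz2 cov1 cov2.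
have [l1 pick1 pos1] := pick_pos nz1; have [l2 pick2 pos2] := pick_pos nz2.
have decS y l : covers_below S y -> 0 < y l -> dec_pt y l \in S.
  by move=> cov pos_l; apply: cov (dec_pt_le y l) (pt_lt_dec pos_l).
have unitS y l : covers_below S y -> 0 < y l -> dec_pt y l != pt0 -> unit_pt l \in S.
  by move=> cov pos_l nz; apply: cov (unit_pt_le pos_l) (pt_lt_unit pos_l nz).
rewrite /code pick1 pick2; case: eqP => [dec1|/eqP nzd1]; case: eqP => [dec2|/eqP nzd2] //.
  by case=> eq_l; subst l2; apply: (dec_pt_inj pos1 pos2); rewrite dec1 dec2.
case=> /inord_rank_inj eq_dec /inord_rank_inj eq_unit.
have := eq_unit cardS (unitS _ _ cov1 pos1 nzd1) (unitS _ _ cov2 pos2 nzd2).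
move=> /unit_pt_inj eq_l; subst l2; apply: (dec_pt_inj pos1 pos2).
exact: eq_dec cardS (decS _ _ cov1 pos1) (decS _ _ cov2 pos2).
Qed.

Definition codes S : {set code_type} :=
  [set t in [seq code S y | y <- enum_fset S & y != pt0]].

Lemma card_codes S : lower_set S -> #|` S|%fset = k.+1 -> #|codes S| = k.
Proof.
move=> lowS cardS.
have uniq_codes : uniq [seq code S y | y <- enum_fset S & y != pt0].
  rewrite map_inj_in_uniq ?filter_uniq ?fset_uniq // => y1 y2.
  rewrite !mem_filter => /andP[nz1 y1S] /andP[nz2 y2S].
  by apply: code_inj => //; apply: lower_set_covers.
rewrite /codes cardsE (card_uniqP uniq_codes) size_map size_filter.
have := count_predC (pred1 pt0) (enum_fset S).
by rewrite count_uniq_mem ?fset_uniq // lower_set_pt0 ?cardS // add1n => -[].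
Qed.

Lemma codes_mem S S' z : lower_set S -> lower_set S' -> #|` S'|%fset = k.+1 ->
  codes S = codes S' -> (forall w, pt_lt w z -> (w \in S) = (w \in S')) ->
  z \in S -> z \in S'.
Proof.
move=> lowS lowS' cardS' eq_codes agree zS.
have [->|nz] := eqVneq z pt0; first by rewrite lower_set_pt0 ?cardS'.
have : code S z \in codes S by rewrite inE; apply: map_f; rewrite mem_filter nz.
rewrite eq_codes inE (eq_code agree) => /mapP[y].
rewrite mem_filter => /andP[nzy yS'] code_zy.
suff -> : z = y by [].
apply: code_inj cardS' nz nzy _ (lower_set_covers lowS' yS') code_zy.
by move=> w le_wz lt_wz; rewrite -agree // (lowS z zS w le_wz).
Qed.

Lemma codes_inj S S' : lower_set S -> lower_set S' ->
  #|` S|%fset = k.+1 -> #|` S'|%fset = k.+1 -> codes S = codes S' -> S = S'.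
Proof.
move=> lowS lowS' cardS cardS' eq_codes; apply/fsetP.
elim/pt_lt_ind => z agree; apply/idP/idP.
  exact: codes_mem.
by apply: codes_mem => // w /agree.
Qed.

End LowerSetCodes.

Lemma p_le_size d n (s : seq {fset Defs.point d}) :
  (forall S, lower_set S -> #|` S|%fset = n -> S \in s) -> (p d n <= size s)%N.
Proof.
move=> all_in.
set t := undup [seq S <- s | `[< lower_set S /\ #|` S|%fset = n >]].
have count_t : counts_lower_sets d n (size t).
  exists t; split=> // [|S]; first exact: undup_uniq.
  rewrite mem_undup mem_filter; split => [/andP[/asboolP //]|[lowS cardS]].
  by rewrite all_in // andbT; apply/asboolP.
have := ClassicalEpsilon.epsilon_spec (inhabits 0%N) (counts_lower_sets d n)
  (ex_intro _ _ count_t).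
rewrite -/(p d n) => -[s' [uniq_s' <- mem_s']].
by apply: uniq_leq_size uniq_s' _ => S /mem_s' [lowS cardS]; exact: all_in.
Qed.

Lemma exists_seq_inj_in (X : choiceType) (Y : finType) (P : X -> Prop) (f : X -> Y)
    (D : {pred Y}) :
  (forall x, P x -> f x \in D) -> (forall x1 x2, P x1 -> P x2 -> f x1 = f x2 -> x1 = x2) ->
  exists2 s : seq X, (size s <= #|D|)%N & forall x, P x -> x \in s.
Proof.
move=> fD f_inj.
pose g (t : Y) := if pselect (exists x, P x /\ f x = t) is left ex
                  then Some (projT1 (cid ex)) else None.
exists (pmap g (enum D)); first by rewrite size_pmap cardE count_size.
move=> x Px; rewrite mem_pmap; apply/mapP; exists (f x); first by rewrite mem_enum fD.
rewrite /g; case: pselect => [ex|]; last by case; exists x.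
by case: (cid ex) => x' [Px' eq_f] /=; rewrite (f_inj _ _ Px' Px eq_f).
Qed.

Lemma p_le_binomial d k : (p d k.+1 <= 'C(d + k.+1 * k.+1, k))%N.
Proof.
have codes_draws (S : {fset Defs.point d}) : lower_set S /\ #|` S|%fset = k.+1 ->
    codes k S \in [set A : {set _} | #|A| == k].
  by case=> lowS cardS; rewrite inE card_codes.
have codes_inj_in (S1 S2 : {fset Defs.point d}) : lower_set S1 /\ #|` S1|%fset = k.+1 ->
    lower_set S2 /\ #|` S2|%fset = k.+1 -> codes k S1 = codes k S2 -> S1 = S2.
  by move=> [low1 card1] [low2 card2]; exact: codes_inj.
have [s size_s all_in] := exists_seq_inj_in codes_draws codes_inj_in.
apply: leq_trans (p_le_size (fun S lowS cardS => all_in S (conj lowS cardS))) _.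
by apply: leq_trans size_s _; rewrite card_draws card_sum card_prod !card_ord.
Qed.

Lemma ffact_le_expn a k : (a ^_ k <= a ^ k)%N.
Proof.
elim: k => [|k IHk]; first by rewrite ffactn0 expn0.
by rewrite ffactnSr expnSr leq_mul ?leq_subr.
Qed.

Local Open Scope classical_set_scope.
Local Open Scope ring_scope.

Section RealBounds.
Variable R : realType.

Lemma expn_le_expR_fact k : (k.+1)%:R ^+ k <= expR 1 ^+ k.+1 * (k`!)%:R :> R.
Proof.
set n : R := (k.+1)%:R; have n0 : 0 < n by rewrite ltr0n.
have le_exp : n ^+ k.+1 / ((k.+1)`!)%:R <= expR 1 ^+ k.+1.
  rewrite -expRM_natl mulr1; apply: le_trans (expR_ge1Dxn k (ltW n0)).
  by rewrite lerDr.
rewrite -ler_pdivrMr ?ltr0n ?fact_gt0 //; apply: le_trans le_exp.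
by rewrite factS natrM exprS invfM mulrACA mulfV ?gt_eqF // mul1r.
Qed.

Lemma binomial_le_pow a k : (4 * a <= 5 * (k.+1 * k.+1))%N ->
  ('C(a, k))%:R <= (5 / 4 * expR 1 * (k.+1)%:R) ^+ k.+1 :> R.
Proof.
move=> le_a; set n : R := (k.+1)%:R; have n0 : 0 < n by rewrite ltr0n.
have bin_fact : ('C(a, k))%:R * (k`!)%:R <= (5 / 4 * n ^+ 2) ^+ k.
  apply: (@le_trans _ _ (a%:R ^+ k)).
    by rewrite -natrM -natrX ler_nat bin_ffact ffact_le_expn.
  apply: lerXn2r; rewrite ?nnegrE ?mulr_ge0 ?exprn_ge0 //.
  have : (4 * a)%:R <= (5 * (k.+1 * k.+1))%:R :> R by rewrite ler_nat.
  rewrite !natrM -/n expr2; lra.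
have : ('C(a, k))%:R * n ^+ k <= expR 1 ^+ k.+1 * (5 / 4) ^+ k * n ^+ k * n ^+ k.
  apply: le_trans (ler_wpM2l (ler0n _ _) (expn_le_expR_fact k)) _.
  rewrite mulrCA -!mulrA; apply: ler_wpM2l; first by rewrite exprn_ge0 ?expR_ge0.
  by apply: le_trans bin_fact _; rewrite exprMn -exprM mulnC exprM.
set K : R := 5 / 4; have K1 : 1 <= K by rewrite /K; lra.
clearbody K.
rewrite ler_pM2r ?exprn_gt0 // => /le_trans; apply.
rewrite !exprMn [K ^+ _ * _]mulrC; apply: ler_pM;
  rewrite ?mulr_ge0 ?exprn_ge0 ?expR_ge0 ?(le_trans ler01 K1) //.
  by apply: ler_wpM2l; [rewrite exprn_ge0 ?expR_ge0 | exact: ler_weXn2l].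
by apply: ler_weXn2l; rewrite ?ler1n.
Qed.

Lemma p_le_pow d n : (0 < n)%N -> (4 * d <= n * n)%N ->
  (p d n)%:R <= (5 / 4 * expR 1 * n%:R) ^+ n :> R.
Proof.
case: n => // k _ le_d.
have le_a : (4 * (d + k.+1 * k.+1) <= 5 * (k.+1 * k.+1))%N by lia.
by apply: le_trans (binomial_le_pow le_a); rewrite ler_nat p_le_binomial.
Qed.

Lemma expR1_ge2 : 2 <= expR 1 :> R.
Proof. by apply: le_trans (expR_ge1Dx 1); rewrite addrC. Qed.

Lemma expR1_le4 : expR 1 <= 4 :> R.
Proof.
have half_le : expR (1 / 2) <= 2 :> R.
  have := expR_ge1Dx (- (1 / 2) : R).
  rewrite expRN -(ler_pM2r (expR_gt0 (1 / 2))) mulVf ?gt_eqF ?expR_gt0 //; lra.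
have -> : expR 1 = expR (1 / 2) ^+ 2 :> R by rewrite -expRM_natl; congr expR; lra.
have -> : 4 = 2 ^+ 2 :> R by rewrite expr2; lra.
by apply: lerXn2r; rewrite ?nnegrE ?expR_ge0.
Qed.

Lemma le_expR_c : 5 / 4 * expR 1 <= expR (3 / (2 * expR 1) + 1) :> R.
Proof.
set E := expR 1; have E0 : 0 < E by exact: expR_gt0.
have E4 : E <= 4 := expR1_le4.
rewrite expRD -/E; apply: le_trans (ler_wpM2r (ltW E0) (expR_ge1Dx _)).
have -> : (1 + 3 / (2 * E)) * E = E + 3 / 2 by field; rewrite gt_eqF.
lra.
Qed.

Lemma powR_le_max (n : nat) (s : R) : (2 <= n)%N -> 0 <= s ->
  n%:R ^+ n <= n%:R `^ (n%:R + 2 * s) * Num.max (2 `^ (- n%:R)) ((2 * n%:R) `^ (- s)).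
Proof.
move=> n2 s0; have n0 : 0 < n%:R :> R by rewrite ltr0n; lia.
apply: (@le_trans _ _ (n%:R `^ (n%:R + 2 * s) * (2 * n%:R) `^ (- s))); last first.
  by rewrite ler_wpM2l ?powR_ge0 // le_max lexx orbT.
rewrite powRD ?(gt_eqF n0) ?implybT // (powR_mulrn _ (ltW n0)) -mulrA.
rewrite -[leLHS]mulr1 ler_wpM2l ?exprn_ge0 // powRN powRrM.
have -> : n%:R `^ 2 = n%:R ^+ 2 :> R by rewrite -(powR_mulrn _ (ltW n0)).
rewrite ler_pdivlMr ?powR_gt0 ?mulr_gt0 // mul1r.
rewrite ge0_ler_powR ?nnegrE ?mulr_ge0 ?exprn_ge0 //.
by rewrite expr2 ler_pM2r // (ler_nat R 2 n).
Qed.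

Lemma cvg_inv_ln : (fun n : nat => (ln (n%:R : R))^-1) @ \oo --> 0.
Proof.
apply/cvgrPdist_lt => e e0.
apply: filterS (nbhs_infty_ge (Num.Def.trunc (expR e^-1)).+1) => n le_n.
have lt_n : expR e^-1 < n%:R by apply: lt_le_trans (truncnS_gt _) _; rewrite ler_nat.
have lt_ln : e^-1 < ln n%:R.
  by rewrite -ltr_expR lnK // posrE (le_lt_trans (expR_ge0 _) lt_n).
have ln0 : 0 < ln (n%:R : R) by apply: lt_trans lt_ln; rewrite invr_gt0.
rewrite sub0r normrN ger0_norm ?invr_ge0 ?(ltW ln0) // -[e]invrK.
by rewrite ltf_pV2 ?posrE ?invr_gt0.
Qed.

Lemma p_lt_bound d n : (0 < d)%N -> (4 * d <= n * n)%N ->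
  (p d n)%:R < 4 * expR ((3 / (2 * expR 1) + 1) * n%:R)
               * n%:R `^ (n%:R + 2 * Num.sqrt d%:R)
               * Num.max (2 `^ (- n%:R)) ((2 * n%:R) `^ (- Num.sqrt d%:R)) :> R.
Proof.
move=> d0 le_d; have n2 : (2 <= n)%N by nia.
rewrite -mulrA; set E := expR _; set B := n%:R `^ _ * Num.max _ _.
have B_ge : n%:R ^+ n <= B := powR_le_max n2 (sqrtr_ge0 _).
have B0 : 0 < B by apply: lt_le_trans B_ge; rewrite exprn_gt0 // ltr0n; lia.
have pow_le : (5 / 4 * expR 1) ^+ n <= E.
  by rewrite /E expRM_natr lerXn2r ?nnegrE ?mulr_ge0 ?expR_ge0 // le_expR_c.
apply: le_lt_trans (p_le_pow (ltnW n2) le_d) _.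
apply: (@le_lt_trans _ _ (E * B)).
  by rewrite exprMn ler_pM ?exprn_ge0 ?mulr_ge0 ?expR_ge0.
have EB0 : 0 < E * B by rewrite mulr_gt0 ?expR_gt0.
by rewrite -mulrA; lra.
Qed.

Lemma p_le_powR_sublinear (dn : nat -> nat) :
  (fun n => (dn n)%:R / n%:R ^+ 2 : R) @ \oo --> 0 ->
  exists f : nat -> R, (fun n => f n / n%:R) @ \oo --> 0 /\
    \forall n \near \oo, (p (dn n) n)%:R <= n%:R `^ (n%:R + f n).
Proof.
move=> dn_o; exists (fun n => 2 * n%:R / ln n%:R); split.
  have eq_f : \forall n \near \oo, 2 * (ln (n%:R : R))^-1 = 2 * n%:R / ln n%:R / n%:R.
    by apply: filterS (nbhs_infty_gt 0) => n n0; rewrite mulrAC mulfK ?pnatr_eq0 -?lt0n.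
  apply: cvg_trans (near_eq_cvg eq_f) _; rewrite -(mulr0 2); exact: cvgMr cvg_inv_ln.
have le_d : \forall n \near \oo, (4 * dn n <= n * n)%N.
  have q0 : 0 < 1 / 4 :> R by lra.
  move/cvgrPdist_lt: dn_o => /(_ _ q0); apply: filterS2 (nbhs_infty_gt 0) => n n0.
  have n0R : 0 < n%:R :> R by rewrite ltr0n.
  rewrite sub0r normrN ger0_norm ?divr_ge0 // ltr_pdivrMr ?exprn_gt0 // => lt_d.
  by rewrite -(ler_nat R) !natrM -expr2; lra.
apply: filterS2 le_d (nbhs_infty_gt 1) => n le_dn n1.
have n0 : 0 < n%:R :> R by rewrite ltr0n ltnW.
have ln0 : 0 < ln (n%:R : R) by rewrite ln_gt0 // ltr1n.
apply: le_trans (p_le_pow (ltnW n1) le_dn) _.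
rewrite powRD ?(gt_eqF n0) ?implybT // (powR_mulrn _ (ltW n0)) /powR (gt_eqF n0).
rewrite divfK ?gt_eqF // expRM_natr mulrC exprMn; apply: ler_wpM2l; first exact: exprn_ge0.
apply: lerXn2r; rewrite ?nnegrE ?mulr_ge0 ?expR_ge0 // expRD.
have E2 := expR1_ge2; nra.
Qed.

End RealBounds.

Theorem proposition2 (R : realType) :
  (forall d n : nat, (0 < d)%N -> (0 < n)%N -> (d%:R <= (n%:R ^+ 2) / 4 :> R) ->
     let c : R := 3 / (2 * expR 1) + 1 in
     (p d n)%:R < 4 * expR (c * n%:R)
                  * n%:R `^ (n%:R + 2 * Num.sqrt d%:R)
                  * Num.max (2 `^ (- n%:R)) ((2 * n%:R) `^ (- Num.sqrt d%:R)))
  /\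
  (forall dn : nat -> nat, (forall n, (0 < dn n)%N) ->
     (fun n : nat => (dn n)%:R / (n%:R ^+ 2) : R) @ \oo --> 0 ->
     exists f : nat -> R,
       (fun n : nat => f n / n%:R) @ \oo --> 0 /\
       \forall n \near \oo, (p (dn n) n)%:R <= n%:R `^ (n%:R + f n)).
Proof.
split=> [d n d0 _ le_d|dn _]; last exact: p_le_powR_sublinear.
apply: p_lt_bound d0 _.
by rewrite -(ler_nat R) !natrM -expr2; lra.
Qed.
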